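(* Let $W$ be a real $mn\times mn$ matrix satisfying (S), (A1), (A2), (A3) from the context, and let $\Lambda=I_n\otimes\big(\tfrac1mI_m-\tfrac1{m^2}\mathbf 1_m\mathbf 1_m^T\big)$. Then there exists an $mn\times mn$ orthogonal matrix $P=[p_1,p_2,\dots,p_{mn}]$ such that (i) $\mathrm{span}\{p_{(m-1)n+k}:1\le k\le n\}=\mathrm{span}\{\varepsilon_k\otimes\mathbf 1_m:1\le k\le n\}$; (ii) $P^TW\Lambda P=\frac1m\,\mathrm{diag}(\mu_1,\dots,\mu_{(m-1)n},0,\dots,0)$ (with $n$ trailing zeros); (iii) $P^T\Lambda P=\frac1m\,\mathrm{diag}(I_{(m-1)n},O_n)$; (iv) $P^TWP=\mathrm{diag}(\mu_1,\dots,\mu_{(m-1)n},\mu_{(m-1)n+1},\dots,\mu_{mn})$; where $\mu_1/m\ge\dots\ge\mu_{(m-1)n}/m$ are the eigenvalues of $W\Lambda$ (with multiplicity) remaining after removing $n$ copies of the eigenvalue $0$, listed in descending order, and $\mu_{(m-1)n+1}\ge\dots\ge\mu_{mn}$ are the eigenvalues of $W$ (with multiplicity) other than $\mu_1,\dots,\mu_{(m-1)n}$, in descending order.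
   Context: Let $n\ge1$, $m\ge2$. $\mathbf 1_m$ is the all-ones vector in $\mathbb{R}^m$ and $\varepsilon_k$ is the $k$-th standard basis vector of $\mathbb{R}^n$; $\otimes$ is the Kronecker product. The matrix $W$ is viewed as an $n\times n$ array of $m\times m$ blocks $W_{i,k}$, and: (S) $W_{i,i}=0$; (A1) $W$ is symmetric; (A2) $W_{i,k}\mathbf 1_m=\lambda_{ik}\mathbf 1_m$ for scalars $\lambda_{ik}$; (A3) $\lambda_{ik}=\lambda_{ki}$. *)

From HB Require Import structures.
From mathcomp Require Import all_boot all_order all_algebra.
From mathcomp Require Import reals.
Set Implicit Arguments. Unset Strict Implicit. Unset Printing Implicit Defensive.
Import Order.TTheory GRing.Theory Num.Theory.
Local Open Scope ring_scope.

Lemma pos_of_lt_mul (x p r : nat) : (x < p * r)%N -> (0 < r)%N.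
Proof. by case: r => [|r] //; rewrite muln0. Qed.

(* Index arithmetic for 'I_(p * r) = 'I_p x 'I_r, row-major:
   the pair (i, a) corresponds to the index i * r + a (0-based). *)
Lemma hi_ord_proof p r (x : 'I_(p * r)) : (x %/ r < p)%N.
Proof.
have r0 : (0 < r)%N by apply: pos_of_lt_mul (ltn_ord x).
by rewrite ltn_divLR.
Qed.

Lemma lo_ord_proof p r (x : 'I_(p * r)) : (x %% r < r)%N.
Proof.
have r0 : (0 < r)%N by apply: pos_of_lt_mul (ltn_ord x).
by rewrite ltn_mod.
Qed.

Definition hi_ord p r (x : 'I_(p * r)) : 'I_p := Ordinal (hi_ord_proof x).
Definition lo_ord p r (x : 'I_(p * r)) : 'I_r := Ordinal (lo_ord_proof x).

Lemma pair_ord_proof p r (i : 'I_p) (a : 'I_r) : (i * r + a < p * r)%N.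
Proof.
have h1 : (i * r + a < i * r + r)%N by rewrite ltn_add2l.
apply: (leq_trans h1); rewrite -mulSnr leq_mul2r; by rewrite ltn_ord orbT.
Qed.

Definition pair_ord p r (i : 'I_p) (a : 'I_r) : 'I_(p * r) :=
  Ordinal (pair_ord_proof i a).

Definition kron (R : pzRingType) p q r s (A : 'M[R]_(p, q)) (B : 'M[R]_(r, s))
  : 'M[R]_(p * r, q * s) :=
  \matrix_(x, y) (A (hi_ord x) (hi_ord y) * B (lo_ord x) (lo_ord y)).

Definition blk (R : pzRingType) n m (W : 'M[R]_(n * m)) (i k : 'I_n) : 'M[R]_m :=
  \matrix_(a, b) W (pair_ord i a) (pair_ord k b).

Definition ones (R : pzRingType) m : 'cV[R]_m := const_mx 1.

Definition eps (R : pzRingType) n (k : 'I_n) : 'cV[R]_n := delta_mx k 0.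

Definition Lam (R : fieldType) n m : 'M[R]_(n * m) :=
  kron (1%:M : 'M[R]_n)
       ((m%:R)^-1 *: 1%:M - (m%:R ^+ 2)^-1 *: (ones R m *m (ones R m)^T)).

Definition ones_basis (R : pzRingType) n m : 'M[R]_(n, n * m) :=
  \matrix_(k < n) (kron (eps R k) (ones R m))^T.

From HB Require Import structures.
From mathcomp Require Import all_boot all_order all_algebra.
From mathcomp Require Import fingroup perm reals complex.
From mathcomp Require Import ring zify.
Import Order.TTheory GRing.Theory Num.Theory.
Local Open Scope ring_scope.

Set Implicit Arguments. Unset Strict Implicit.

(* The vectors [eps_k (x) 1_m] span a subspace V that W maps into itself: by (A2) and the
   symmetry of W, [(eps_k (x) 1_m)^T W] is a combination of the [(eps_l (x) 1_m)^T].
   Moreover Lambda is 1/m times the orthogonal projection onto the orthogonal complement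
   of V.  Diagonalizing the symmetric W separately on that complement and on V, with
   sorted eigenvalues, gives one orthonormal basis in which W, Lambda and W Lambda are
   all diagonal.  The real spectral theorem behind this is proved by induction on the
   dimension, a real eigenvalue being supplied by the spectral theorem for hermitian
   complex matrices. *)

Definition nonincreasing_rv (R : numDomainType) k (d : 'rV[R]_k) :=
  forall i j : 'I_k, (i <= j)%N -> d 0 j <= d 0 i.

Section OrthonormalRows.
Variable R : comNzRingType.

Lemma ortho_sym m p n (A : 'M[R]_(m, n)) (B : 'M[R]_(p, n)) :
  A *m B^T = 0 -> B *m A^T = 0.
Proof. by move=> AB; rewrite -[LHS]trmxK trmx_mul trmxK AB trmx0. Qed.

Lemma col_mx_orthonormal m p n (A : 'M[R]_(m, n)) (B : 'M[R]_(p, n)) :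
  A *m A^T = 1%:M -> B *m B^T = 1%:M -> A *m B^T = 0 ->
  col_mx A B *m (col_mx A B)^T = 1%:M.
Proof.
move=> AA BB AB.
by rewrite tr_col_mx mul_col_row AA BB AB (ortho_sym AB) -scalar_mx_block.
Qed.

Lemma perm_mx_orthonormal n (s : 'S_n) : perm_mx s *m (perm_mx s)^T = 1%:M :> 'M[R]_n.
Proof. by rewrite tr_perm_mx -perm_mxM mulgV perm_mx1. Qed.

Lemma char_poly_orthogonal_conj n (T A : 'M[R]_n) : T *m T^T = 1%:M ->
  char_poly (T *m A *m T^T) = char_poly A.
Proof.
move=> TT; pose Tp := map_mx polyC T; pose Ttp := map_mx polyC T^T.
have TTp : Tp *m Ttp = 1%:M by rewrite -map_mxM TT map_mx1.
rewrite /char_poly (_ : char_poly_mx _ = Tp *m char_poly_mx A *m Ttp).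
  by rewrite !det_mulmx mulrAC -det_mulmx TTp det1 mul1r.
rewrite /char_poly_mx mulmxBr mulmxBl !map_mxM.
by rewrite mul_mx_scalar -scalemxAl TTp scalemx1.
Qed.

Lemma char_poly_diag n (d : 'rV[R]_n) :
  char_poly (diag_mx d) = \prod_(i < n) ('X - (d 0 i)%:P).
Proof.
rewrite char_poly_trig ?diag_mx_is_trig //.
by apply: eq_bigr => i _; rewrite mxE eqxx mulr1n.
Qed.

End OrthonormalRows.

Section SymmetricDiagonalization.
Variable R : rcfType.

Lemma dot_self_ge0 k (x : 'rV[R]_k) : 0 <= (x *m x^T) 0 0.
Proof. by rewrite mxE; apply: sumr_ge0 => i _; rewrite mxE -expr2 sqr_ge0. Qed.

Lemma dot_self_eq0 k (x : 'rV[R]_k) : ((x *m x^T) 0 0 == 0) = (x == 0).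
Proof.
apply/idP/eqP => [|->]; last by rewrite mul0mx mxE.
rewrite mxE psumr_eq0 => [/allP x0|i _]; last by rewrite mxE -expr2 sqr_ge0.
apply/rowP => j; have := x0 j (mem_index_enum _).
by rewrite mxE -expr2 sqrf_eq0 mxE => /eqP.
Qed.

Lemma normalize_row k (x : 'rV[R]_k) : x != 0 ->
  exists c : R, (c *: x) *m (c *: x)^T = 1%:M.
Proof.
move=> x_neq0; set s := (x *m x^T) 0 0.
have s_gt0 : 0 < s by rewrite lt_def dot_self_eq0 x_neq0 dot_self_ge0.
exists (Num.sqrt s)^-1.
rewrite linearZ /= -scalemxAl -scalemxAr scalerA [x *m x^T]mx11_scalar -/s.
by rewrite -invfM -expr2 sqr_sqrtr ?ltW // scale_scalar_mx mulVf ?gt_eqF.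
Qed.

(* Over [R[i]] the matrix is hermitian, so its spectrum is real. *)
Lemma symmetric_eigenvalue k (B : 'M[R]_k.+1) : B^T = B -> exists a, eigenvalue B a.
Proof.
move=> symB; pose Bc := map_mx (real_complex R) B.
have Bc_herm : Bc \is hermsymmx.
  apply: realsym_hermsym.
    by apply/is_hermitianmxP; rewrite expr0 scale1r map_mx_id // /Bc map_trmx symB.
  by apply/mxOverP => i j; rewrite mxE; apply/complex_realP; exists (B i j).
have /orthomx_spectralP Bc_diag := hermitian_normalmx Bc_herm.
set P := spectralmx Bc in Bc_diag; set d := spectral_diag Bc in Bc_diag.
have /complex_realP [a da] : d 0 0 \is Num.real.
  by have /mxOverP := hermitian_spectral_diag_real Bc_herm; apply.
have : eigenvalue Bc (d 0 0).
  apply/eigenvalueP; exists (row 0 P).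
    rewrite -row_mul Bc_diag !mulmxA mulmxV ?spectral_unit // mul1mx.
    by rewrite row_mul row_diag_mx -scalemxAl -rowE.
  have : row 0 (P *m invmx P) != 0.
    rewrite mulmxV ?spectral_unit // row1.
    by apply/eqP => /rowP/(_ 0); rewrite !mxE eqxx => /eqP; rewrite oner_eq0.
  by apply: contraNneq => P0; rewrite row_mul P0 mul0mx.
by rewrite da => ev; exists a; rewrite -(eigenvalue_map (real_complex R)).
Qed.

Lemma symmetric_unit_eigenvector k (B : 'M[R]_k.+1) : B^T = B ->
  exists a (x : 'rV[R]_k.+1), x *m B = a *: x /\ x *m x^T = 1%:M.
Proof.
move=> /symmetric_eigenvalue [a /eigenvalueP [x xB x_neq0]].
have [c xx] := normalize_row x_neq0.
by exists a, (c *: x); rewrite -scalemxAl xB !scalerA mulrC.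
Qed.

Lemma orthonormal_ext r N (U : 'M[R]_(r, N)) : (r < N)%N -> U *m U^T = 1%:M ->
  exists y : 'rV[R]_N, y *m y^T = 1%:M /\ U *m y^T = 0.
Proof.
move=> rN UU.
have [j e_notin_U] : exists j : 'I_N, ~~ ((delta_mx 0 j : 'rV[R]_N) <= U)%MS.
  apply/existsP; apply: contraTT rN; rewrite negb_exists => /forallP e_in_U.
  have : (1%:M <= U)%MS by apply/row_subP => i; rewrite row1; apply/negPn.
  move/mxrankS; rewrite mxrank1 => /leq_trans/(_ (rank_leq_row U)).
  by rewrite leqNgt.
pose e : 'rV[R]_N := delta_mx 0 j; pose y := e - (e *m U^T) *m U.
have Uy : U *m y^T = 0.
  by rewrite linearB /= !trmx_mul trmxK mulmxBr !mulmxA UU mul1mx subrr.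
have y_neq0 : y != 0.
  by apply: contraNneq e_notin_U => /subr0_eq; rewrite -/e => ->; apply: submxMl.
have [c yy] := normalize_row y_neq0.
by exists (c *: y); split => //; rewrite linearZ /= -scalemxAr Uy scaler0.
Qed.

Lemma orthonormal_completion N d r (U : 'M[R]_(r, N)) : (r + d = N)%N ->
  U *m U^T = 1%:M -> exists C : 'M[R]_(d, N), C *m C^T = 1%:M /\ U *m C^T = 0.
Proof.
elim: d r U => [|d IH] r U rdN UU.
  by exists 0; split; apply/matrixP => ? [].
have [y [yy Uy]] : exists y : 'rV_N, y *m y^T = 1%:M /\ U *m y^T = 0.
  by apply: orthonormal_ext UU; rewrite -rdN addnS ltnS leq_addr.
have r1dN : (r + 1 + d = N)%N by rewrite -addnA add1n.
have [C [CC UyC]] := IH _ _ r1dN (col_mx_orthonormal UU yy Uy).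
move/eqP: UyC; rewrite mul_col_mx col_mx_eq0 => /andP [/eqP UC /eqP yC].
have UyC : U *m (col_mx y C)^T = 0 by rewrite tr_col_mx mul_mx_row Uy UC row_mx0.
by exists (col_mx y C); split; [exact: (col_mx_orthonormal yy CC yC) | exact: UyC].
Qed.

Lemma symmetric_diagonalization k (B : 'M[R]_k) : B^T = B ->
  exists (S : 'M[R]_k) (d : 'rV[R]_k), S *m S^T = 1%:M /\ S *m B = diag_mx d *m S.
Proof.
elim: k B => [|k IH] B symB.
  by exists 1%:M, 0; split; [rewrite trmx1 mulmx1 | apply/matrixP => [[]]].
have [a [x [xB xx]]] := symmetric_unit_eigenvector symB.
have [C [CC xC]] := orthonormal_completion (add1n k) xx.
have xCxC := col_mx_orthonormal xx CC xC.
pose B' := C *m B *m C^T.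
have symB' : B'^T = B' by rewrite /B' !trmx_mul trmxK symB mulmxA.
have [S' [d' [SS' SB']]] := IH B' symB'.
(* The orthogonal complement of the eigenvector [x] is [B]-invariant. *)
have CB : C *m B = B' *m C.
  rewrite -[C *m B]mulmx1 -(mulmx1C xCxC) tr_col_mx mul_row_col mulmxDr !mulmxA.
  suff -> : C *m B *m x^T = 0 by rewrite mul0mx add0r.
  by rewrite -mulmxA -symB -trmx_mul xB linearZ /= -scalemxAr (ortho_sym xC) scaler0.
have SCSC : col_mx x (S' *m C) *m (col_mx x (S' *m C))^T = 1%:M :> 'M_(1 + k).
  apply: col_mx_orthonormal => //.
    by rewrite trmx_mul mulmxA -(mulmxA S') CC mulmx1.
  by rewrite trmx_mul mulmxA xC mul0mx.
have SCB : col_mx x (S' *m C) *m B =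
    diag_mx (row_mx (const_mx a : 'rV_1) d') *m col_mx x (S' *m C) :> 'M_(1 + k, k.+1).
  rewrite mul_col_mx xB -mulmxA CB mulmxA SB' diag_mx_row mul_block_col.
  by rewrite diag_const_mx mul_scalar_mx !mul0mx addr0 add0r mulmxA.
exists (col_mx x (S' *m C)), (row_mx (const_mx a : 'rV_1) d').
by split; [exact: SCSC | exact: SCB].
Qed.

Lemma sorting_perm k (d : 'rV[R]_k) :
  exists s : {perm 'I_k}, nonincreasing_rv (\row_i d 0 (s i)).
Proof.
pose r (i j : 'I_k) := d 0 j <= d 0 i.
have r_trans : transitive r by move=> j i l /= ij jl; apply: le_trans jl ij.
have r_refl : reflexive r by move=> i; apply: lexx.
pose ss := sort r (enum 'I_k).
have ss_size : size ss = k by rewrite size_sort size_enum_ord.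
have ss_uniq : uniq ss by rewrite sort_uniq enum_uniq.
have ss_sorted : sorted r ss by apply: sort_sorted => i j; apply: le_total.
have nth_inj : injective (fun i : 'I_k => nth i ss i).
  move=> i j /= eq_ij; apply/val_inj/eqP.
  rewrite -(nth_uniq i _ _ ss_uniq) ?ss_size ?ltn_ord //.
  by rewrite eq_ij (set_nth_default j i) ?ss_size ?ltn_ord.
exists (perm nth_inj) => i j le_ij; rewrite !mxE !permE.
have := sorted_leq_nth r_trans r_refl i ss_sorted; rewrite ss_size => /(_ i j).
by rewrite !inE (set_nth_default i j) ?ss_size ?ltn_ord //; apply.
Qed.

Lemma symmetric_diagonalization_sorted k (B : 'M[R]_k) : B^T = B ->
  exists (S : 'M[R]_k) (d : 'rV[R]_k),
    [/\ S *m S^T = 1%:M, S *m B = diag_mx d *m S & nonincreasing_rv d].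
Proof.
move=> /symmetric_diagonalization [S [d [SS SB]]].
have [s d_sorted] := sorting_perm d.
exists (perm_mx s *m S), (\row_i d 0 (s i)); split => //.
  by rewrite trmx_mul mulmxA -(mulmxA _ S) SS mulmx1 perm_mx_orthonormal.
rewrite -mulmxA SB !mulmxA; congr (_ *m _); apply/matrixP => i j.
by rewrite mul_mx_diag mul_diag_mx !mxE mulrC; case: eqP => [<-|_]; rewrite ?mulr0.
Qed.

Lemma invariant_diagonalization N r (A : 'M[R]_N) (U : 'M[R]_(r, N)) :
  A^T = A -> U *m U^T = 1%:M -> (U *m A <= U)%MS ->
  exists (Q : 'M[R]_(r, N)) (d : 'rV[R]_r),
    [/\ Q *m Q^T = 1%:M, (Q == U)%MS, Q *m A = diag_mx d *m Q & nonincreasing_rv d].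
Proof.
move=> symA UU /submxP [X UA].
have XE : X = U *m A *m U^T by rewrite UA -mulmxA UU mulmx1.
have symX : X^T = X by rewrite XE !trmx_mul trmxK symA mulmxA.
have [S [d [SS SX d_sorted]]] := symmetric_diagonalization_sorted symX.
exists (S *m U), d; split => //.
- by rewrite trmx_mul mulmxA -(mulmxA S) UU mulmx1.
- apply/andP; split; first exact: submxMl.
  by rewrite -{1}[U]mul1mx -(mulmx1C SS) -mulmxA submxMl.
- by rewrite -mulmxA UA !mulmxA SX.
Qed.

End SymmetricDiagonalization.

Section PairIndices.
Variables n m : nat.

Lemma hi_pair (i : 'I_n) (a : 'I_m) : hi_ord (pair_ord i a) = i.
Proof.
have m_gt0 : (0 < m)%N by apply: leq_ltn_trans (ltn_ord a).
by apply/val_inj; rewrite /= divnMDl // divn_small // addn0.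
Qed.

Lemma lo_pair (i : 'I_n) (a : 'I_m) : lo_ord (pair_ord i a) = a.
Proof. by apply/val_inj; rewrite /= modnMDl modn_small. Qed.

Lemma pair_hilo (x : 'I_(n * m)) : pair_ord (hi_ord x) (lo_ord x) = x.
Proof. by apply/val_inj; rewrite /= -divn_eq. Qed.

Lemma big_pair (R : Type) (idx : R) (op : Monoid.com_law idx) (F : 'I_(n * m) -> R) :
  \big[op/idx]_x F x = \big[op/idx]_(i < n) \big[op/idx]_(a < m) F (pair_ord i a).
Proof.
rewrite pair_big (reindex (fun ia : 'I_n * 'I_m => pair_ord ia.1 ia.2)) //.
exists (fun x => (hi_ord x, lo_ord x)) => [[i a] _|x _] /=.
  by rewrite hi_pair lo_pair.
by rewrite pair_hilo.
Qed.

Lemma pair_ord_eq (x y : 'I_(n * m)) :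
  (x == y) = (hi_ord x == hi_ord y) && (lo_ord x == lo_ord y).
Proof.
apply/eqP/andP => [-> //|[/eqP hxy /eqP lxy]].
by rewrite -(pair_hilo x) -(pair_hilo y) hxy lxy.
Qed.

End PairIndices.

Section OnesBasis.
Variable R : comNzRingType.
Variables n m : nat.
Local Notation OB := (ones_basis R n m).

Lemma ones_basisE k (x : 'I_(n * m)) : OB k x = (hi_ord x == k)%:R.
Proof. by rewrite !mxE mulr1 (ord1 (hi_ord _)) eqxx andbT. Qed.

Lemma mul_ones_basis_tr : OB *m OB^T = m%:R *: 1%:M.
Proof.
apply/matrixP => k l; rewrite mxE big_pair (bigD1 k) //=.
rewrite [X in _ + X]big1 ?addr0 => [|i ik]; last first.
  by apply: big1 => a _; rewrite ones_basisE mxE ones_basisE hi_pair (negbTE ik) mul0r.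
rewrite (eq_bigr (fun _ => (k == l)%:R)) => [|a _]; last first.
  by rewrite ones_basisE mxE ones_basisE hi_pair eqxx mul1r eq_sym.
by rewrite sumr_const card_ord !mxE mulr_natl.
Qed.

Lemma mul_tr_ones_basis : OB^T *m OB = \matrix_(x, y) (hi_ord x == hi_ord y)%:R.
Proof.
apply/matrixP => x y; rewrite !mxE (bigD1 (hi_ord x)) //= [X in _ + X]big1 => [|k kx].
  by rewrite addr0 mxE !ones_basisE eqxx mul1r eq_sym.
by rewrite mxE !ones_basisE eq_sym (negbTE kx) mul0r.
Qed.

Lemma ones_basis_mulmx (W : 'M[R]_(n * m)) (lambda : 'I_n -> 'I_n -> R) : W^T = W ->
  (forall i k, blk W i k *m ones R m = lambda i k *: ones R m) ->
  OB *m W = (\matrix_(k, l) lambda l k) *m OB.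
Proof.
move=> symW Wones; apply/matrixP => k y; rewrite !mxE big_pair.
rewrite (bigD1 k) //= [X in _ + X]big1 ?addr0 => [|i ik]; last first.
  by apply: big1 => a _; rewrite ones_basisE hi_pair (negbTE ik) mul0r.
rewrite (bigD1 (hi_ord y)) //= [X in _ = _ + X]big1 ?addr0 => [|l ly]; last first.
  by rewrite ones_basisE eq_sym (negbTE ly) mulr0.
have /matrixP/(_ (lo_ord y) 0) Wy := Wones (hi_ord y) k.
rewrite !mxE mulr1 in Wy; rewrite ones_basisE eqxx mulr1 mxE -Wy.
apply: eq_bigr => a _; rewrite ones_basisE hi_pair eqxx mul1r !mxE mulr1.
by rewrite pair_hilo -[in LHS]symW mxE.
Qed.

End OnesBasis.

Lemma LamE (R : fieldType) n m : m%:R != 0 :> R ->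
  Lam R n m = (m%:R)^-1 *: (1%:M - (m%:R)^-1 *: ((ones_basis R n m)^T *m ones_basis R n m)).
Proof.
move=> m_neq0; rewrite mul_tr_ones_basis; apply/matrixP => x y.
rewrite !mxE big_ord1 !mxE pair_ord_eq.
by case: (hi_ord x == _); case: (lo_ord x == _); rewrite ?mulr1n ?mulr0n; field.
Qed.

Section SplitIndices.
Variables p q : nat.

Lemma big_ord_lt_lshift (R : Type) (idx : R) (op : Monoid.law idx) (F : 'I_(p + q) -> R) :
  \big[op/idx]_(j < p + q | (j < p)%N) F j = \big[op/idx]_(i < p) F (lshift q i).
Proof.
rewrite big_split_ord /= [X in op _ X]big_pred0 => [|i]; last by rewrite ltnNge leq_addr.
by rewrite Monoid.mulm1; apply: eq_bigl => i; rewrite ltn_ord.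
Qed.

Lemma char_poly_diag_lt (R : comNzRingType) (F : 'I_(p + q) -> R) :
  char_poly (diag_mx (\row_j (if (j < p)%N then F j else 0))) =
    'X^q * \prod_(j < p + q | (j < p)%N) ('X - (F j)%:P).
Proof.
rewrite char_poly_diag big_split_ord big_ord_lt_lshift mulrC; congr (_ * _).
  by apply: eq_bigr => i _; rewrite mxE /= ltn_ord.
rewrite (eq_bigr (fun _ => 'X)) => [|i _]; first by rewrite prodr_const card_ord.
by rewrite mxE /= ltnNge leq_addr subr0.
Qed.

Lemma diag_lt_block (R : pzSemiRingType) :
  diag_mx (\row_(j < p + q) (if (j < p)%N then 1 else 0)) = block_mx 1%:M 0 0 (0 : 'M[R]_q).
Proof.
suff -> : \row_(j < p + q) (if (j < p)%N then 1 else 0) = row_mx (const_mx 1) (0 : 'rV[R]_q).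
  by rewrite diag_mx_row diag_const_mx linear0.
by apply/rowP => j; rewrite !mxE; case: splitP => k _; rewrite !mxE.
Qed.

Lemma rows_ge_col_mx (R : nmodType) n (A : 'M[R]_(p, n)) (B : 'M[R]_(q, n)) :
  \matrix_(j < p + q) (if (p <= j)%N then (col j (col_mx A B)^T)^T else 0) = col_mx 0 B.
Proof.
apply/matrixP => i k; rewrite !mxE leqNgt; case: splitP => [i1 _|i2 i_eq] /=.
  by rewrite !mxE.
have -> : i = rshift p i2 by apply/val_inj.
by rewrite tr_col trmxK mxE col_mxEd.
Qed.

Lemma row_mx_nonincreasing (R : numDomainType) (d1 : 'rV[R]_p) (d2 : 'rV[R]_q) :
  nonincreasing_rv d1 -> nonincreasing_rv d2 ->
  (forall j1 j2 : 'I_(p + q), (j1 <= j2)%N -> (j2 < p)%N ->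
     row_mx d1 d2 0 j2 <= row_mx d1 d2 0 j1) /\
  (forall j1 j2 : 'I_(p + q), (p <= j1)%N -> (j1 <= j2)%N ->
     row_mx d1 d2 0 j2 <= row_mx d1 d2 0 j1).
Proof.
move=> d1_sorted d2_sorted; split=> j1 j2 h12 h; rewrite !mxE;
  case: splitP => k2 E2; case: splitP => k1 E1;
  move: (ltn_ord k1) (ltn_ord k2) => k1p k2p; try lia.
- by apply: d1_sorted; lia.
- by apply: d2_sorted; lia.
Qed.
End SplitIndices.

Section RowSpaces.
Variable F : fieldType.

Lemma submx_ortho m1 m2 p1 p2 n (A : 'M[F]_(m1, n)) (B : 'M[F]_(m2, n))
    (U : 'M[F]_(p1, n)) (V : 'M[F]_(p2, n)) :
  (A <= U)%MS -> (B <= V)%MS -> U *m V^T = 0 -> A *m B^T = 0.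
Proof.
move=> /submxP [X ->] /submxP [Y ->] UV.
by rewrite trmx_mul mulmxA -(mulmxA X) UV mulmx0 mul0mx.
Qed.

Lemma orthonormal_proj_submx r n (Q U : 'M[F]_(r, n)) :
  Q *m Q^T = 1%:M -> U *m U^T = 1%:M -> (Q <= U)%MS -> Q^T *m Q = U^T *m U.
Proof.
move=> QQ UU /submxP [Y QE].
have YY : Y *m Y^T = 1%:M by rewrite -QQ QE trmx_mul mulmxA -(mulmxA Y) UU mulmx1.
by rewrite QE trmx_mul -mulmxA (mulmxA Y^T) (mulmx1C YY) mul1mx.
Qed.

Lemma col_mx_proj_conj p q n (Q1 : 'M[F]_(p, n)) (Q2 U : 'M[F]_(q, n)) :
  col_mx Q1 Q2 *m (col_mx Q1 Q2)^T = 1%:M -> U *m U^T = 1%:M -> (Q2 <= U)%MS ->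
  col_mx Q1 Q2 *m (1%:M - U^T *m U) *m (col_mx Q1 Q2)^T = block_mx 1%:M 0 0 0.
Proof.
move=> TT UU Q2U; have blockTT := TT.
rewrite tr_col_mx mul_col_row (scalar_mx_block p q 1) in blockTT.
case/eq_block_mx: blockTT => _ Q1Q2 _ Q2Q2.
rewrite -(orthonormal_proj_submx Q2Q2 UU Q2U) mulmxBr mulmxBl mulmx1 TT !mulmxA.
have -> : col_mx Q1 Q2 *m Q2^T = col_mx 0 1%:M by rewrite mul_col_mx Q1Q2 Q2Q2.
rewrite -mulmxA tr_col_mx mul_mx_row (ortho_sym Q1Q2) Q2Q2 mul_col_row !mul0mx !mul1mx.
by rewrite (scalar_mx_block p q 1) opp_block_mx add_block_mx !oppr0 !addr0 subrr.
Qed.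

End RowSpaces.

Section InvariantSplitting.
Variables (R : rcfType) (p q : nat).
Variables (W : 'M[R]_(p + q)) (U2 : 'M[R]_(q, p + q)).
Hypotheses (symW : W^T = W) (U2U2 : U2 *m U2^T = 1%:M) (U2W : (U2 *m W <= U2)%MS).

Lemma orthocomplement_invariant (U1 : 'M[R]_(p, p + q)) :
  U1 *m U1^T = 1%:M -> U1 *m U2^T = 0 -> (U1 *m W <= U1)%MS.
Proof.
move=> U1U1 U1U2; have [X U2WE] := submxP U2W.
have U1WU2 : U1 *m W *m U2^T = 0.
  by rewrite -mulmxA -symW -trmx_mul U2WE trmx_mul mulmxA U1U2 mul0mx.
rewrite -[U1 *m W]mulmx1 -(mulmx1C (col_mx_orthonormal U1U1 U2U2 U1U2)).
by rewrite tr_col_mx mul_row_col mulmxDr !mulmxA U1WU2 mul0mx addr0 submxMl.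
Qed.

Lemma invariant_split_diagonalization :
  exists (Q1 : 'M[R]_(p, p + q)) (Q2 : 'M[R]_(q, p + q)) (d1 : 'rV[R]_p) (d2 : 'rV[R]_q),
    [/\ col_mx Q1 Q2 *m (col_mx Q1 Q2)^T = 1%:M, (Q2 == U2)%MS,
        col_mx Q1 Q2 *m W = diag_mx (row_mx d1 d2) *m col_mx Q1 Q2,
        nonincreasing_rv d1 & nonincreasing_rv d2].
Proof.
have [U1 [U1U1 U2U1]] := orthonormal_completion (addnC q p) U2U2.
have U1U2 := ortho_sym U2U1.
have [Q1 [d1 [Q1Q1 /andP [Q1U1 _] Q1W d1_sorted]]] :=
  invariant_diagonalization symW U1U1 (orthocomplement_invariant U1U1 U1U2).
have [Q2 [d2 [Q2Q2 Q2U2 Q2W d2_sorted]]] := invariant_diagonalization symW U2U2 U2W.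
exists Q1, Q2, d1, d2; split => //.
  apply: col_mx_orthonormal => //; apply: submx_ortho Q1U1 _ U1U2.
  by case/andP: Q2U2.
by rewrite mul_col_mx Q1W Q2W diag_mx_row mul_block_col !mul0mx addr0 add0r.
Qed.

End InvariantSplitting.

Lemma invariant_spectral_form (R : rcfType) N p q (pqN : (p + q = N)%N)
    (W L : 'M[R]_N) (U2 B0 : 'M[R]_(q, N)) (c : R) :
  W^T = W -> U2 *m U2^T = 1%:M -> (U2 *m W <= U2)%MS -> (U2 == B0)%MS ->
  L = c *: (1%:M - U2^T *m U2) ->
  exists (P : 'M[R]_N) (mu : 'I_N -> R),
    P^T *m P = 1%:M /\
    [/\ (\matrix_(j < N) (if (p <= j)%N then (col j P)^T else 0) == B0)%MS,
      P^T *m (W *m L) *m P = c *: diag_mx (\row_j (if (j < p)%N then mu j else 0)),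
      P^T *m L *m P = c *: diag_mx (\row_j (if (j < p)%N then 1 else 0)),
      P^T *m W *m P = diag_mx (\row_j mu j) &
      [/\ char_poly (W *m L) = 'X^q * \prod_(j < N | (j < p)%N) ('X - (mu j * c)%:P),
          char_poly W = \prod_(j < N) ('X - (mu j)%:P),
          (forall j1 j2 : 'I_N, (j1 <= j2)%N -> (j2 < p)%N -> mu j2 <= mu j1) &
          (forall j1 j2 : 'I_N, (p <= j1)%N -> (j1 <= j2)%N -> mu j2 <= mu j1)]].
Proof.
subst N => symW U2U2 U2W U2B0 ->.
have [Q1 [Q2 [d1 [d2 [TT Q2U2 TW d1_sorted d2_sorted]]]]] :=
  invariant_split_diagonalization symW U2U2 U2W.
set T := col_mx Q1 Q2 in TT TW *; pose D := row_mx d1 d2.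
have TtT : T^T *m T = 1%:M := mulmx1C TT.
have TWT : T *m W *m T^T = diag_mx (\row_j D 0 j).
  by rewrite TW -mulmxA TT mulmx1; apply/congr1/rowP => j; rewrite mxE.
have TLT : T *m (c *: (1%:M - U2^T *m U2)) *m T^T =
    c *: diag_mx (\row_j (if (j < p)%N then 1 else 0)).
  rewrite -scalemxAr -scalemxAl col_mx_proj_conj ?diag_lt_block //.
  by case/andP: Q2U2.
have TWLT : T *m (W *m (c *: (1%:M - U2^T *m U2))) *m T^T =
    c *: diag_mx (\row_j (if (j < p)%N then D 0 j else 0)).
  rewrite (_ : T *m _ *m T^T = T *m W *m T^T *m (T *m (c *: (1%:M - U2^T *m U2)) *m T^T)).
    rewrite TWT TLT -scalemxAr mulmx_diag; congr (_ *: diag_mx _); apply/rowP => j.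
    by rewrite !mxE; case: ifP; rewrite ?mulr1 ?mulr0.
  by rewrite !mulmxA -(mulmxA _ T^T T) TtT mulmx1.
have [D_sorted_l D_sorted_r] := row_mx_nonincreasing d1_sorted d2_sorted.
exists T^T, (fun j => D 0 j); rewrite trmxK TT; split => //; split => //.
- rewrite rows_ge_col_mx -!addsmxE !adds0mx.
  by apply/eqmxP; apply: eqmx_trans (eqmxP Q2U2) (eqmxP U2B0).
- split => //.
  + rewrite -(char_poly_orthogonal_conj _ TT) TWLT -char_poly_diag_lt -linearZ /=.
    congr (char_poly (diag_mx _)); apply/rowP => j; rewrite !mxE.
    by case: ifP; rewrite ?mulr0 // mulrC.
  + rewrite -(char_poly_orthogonal_conj _ TT) TWT char_poly_diag.
    by apply: eq_bigr => j _; rewrite mxE.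
Qed.

Unset Implicit Arguments.

Theorem lemma2 (R : realType) (n m : nat) (W : 'M[R]_(n * m)) :
  (1 <= n)%N -> (2 <= m)%N ->
  (* (S) *) (forall i : 'I_n, blk W i i = 0) ->
  (* (A1) *) W^T = W ->
  (* (A2) *)
  forall lambda : 'I_n -> 'I_n -> R,
  (forall i k : 'I_n, blk W i k *m ones R m = lambda i k *: ones R m) ->
  (* (A3) *) (forall i k : 'I_n, lambda i k = lambda k i) ->
  exists (P : 'M[R]_(n * m)) (mu : 'I_(n * m) -> R),
    P^T *m P = 1%:M /\
    [/\
    (* (i): span{p_j : j >= (m-1)n} = span{eps_k (x) 1_m} (0-based j) *)
      (\matrix_(j < n * m)
         (if ((m - 1) * n <= j)%N then (col j P)^T else 0)
        == ones_basis R n m)%MS,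
    (* (ii) *)
      P^T *m (W *m Lam R n m) *m P
        = (m%:R)^-1 *: diag_mx (\row_j (if (j < (m - 1) * n)%N then mu j else 0)),
    (* (iii) *)
      P^T *m Lam R n m *m P
        = (m%:R)^-1 *: diag_mx (\row_j (if (j < (m - 1) * n)%N then 1 else 0)),
    (* (iv) *)
      P^T *m W *m P = diag_mx (\row_j mu j) &
    (* description of mu *)
      [/\ (* mu_1/m .. mu_{(m-1)n}/m are the eigenvalues of W Lambda after removing n zeros *)
          char_poly (W *m Lam R n m)
            = 'X^n * \prod_(j < n * m | (j < (m - 1) * n)%N) ('X - (mu j / m%:R)%:P),
          (* mu_1..mu_{mn} are the eigenvalues of W, so the last n are the remaining ones *)
          char_poly W = \prod_(j < n * m) ('X - (mu j)%:P),
          (* descending order within the first (m-1)n *)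
          (forall j1 j2 : 'I_(n * m), (j1 <= j2)%N -> (j2 < (m - 1) * n)%N -> mu j2 <= mu j1) &
          (* descending order within the last n *)
          (forall j1 j2 : 'I_(n * m), ((m - 1) * n <= j1)%N -> (j1 <= j2)%N -> mu j2 <= mu j1)]].
Proof.
move=> _ m_ge2 _ symW lambda Wones _.
have m_gt0 : (0 < m)%N by apply: leq_trans m_ge2.
have m_neq0 : m%:R != 0 :> R by rewrite pnatr_eq0 -lt0n.
pose s := Num.sqrt (m%:R : R).
have s_neq0 : s != 0 by rewrite sqrtr_eq0 -ltNge ltr0n.
have s2 : s^-1 * s^-1 = (m%:R)^-1 by rewrite -invfM -expr2 sqr_sqrtr ?ler0n.
pose U2 := s^-1 *: ones_basis R n m.
have U2U2 : U2 *m U2^T = 1%:M.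
  rewrite /U2 linearZ /= -(scalemxAl s^-1 (ones_basis R n m)) -scalemxAr.
  by rewrite scalerA s2 mul_ones_basis_tr scalerA mulVf // scale1r.
have U2W : (U2 *m W <= U2)%MS.
  by rewrite /U2 -scalemxAl (ones_basis_mulmx symW Wones) scalemxAr submxMl.
have U2B0 : (U2 == ones_basis R n m)%MS by apply/eqmxP; apply: eqmx_scale; rewrite invr_eq0.
have U2tU2 : U2^T *m U2 = (m%:R)^-1 *: ((ones_basis R n m)^T *m ones_basis R n m).
  by rewrite /U2 !linearZ /= -(scalemxAl s^-1 (ones_basis R n m)^T) scalerA s2.
have LamU2 : Lam R n m = (m%:R)^-1 *: (1%:M - U2^T *m U2) by rewrite U2tU2 LamE.
have pqN : ((m - 1) * n + n = n * m)%N.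
  by rewrite -{2}(mul1n n) -mulnDl subnK 1?ltnW // mulnC.
exact (invariant_spectral_form pqN symW U2U2 U2W U2B0 LamU2).
Qed.
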